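(* Let $(P_n)_{n\ge0}$ be monic polynomials with $\deg P_n=n$, $P_n(x)=\sum_{i=0}^nb_{n,i}x^i$, let $(\gamma_n)_{n\ge1}$ be nonzero complex numbers, and let $P_0^{(1)}=P_0$, $P_n^{(1)}=P_n+\gamma_nP_{n-1}$ ($n\ge1$), with coefficients $P_n^{(1)}(x)=\sum_{i=0}^nb^{(1)}_{n,i}x^i$. (In the paper's setting the $P_n$ are the eigenpolynomials of a differential operator as in the standing assumptions below.) For a family $(Q_m)$ of monic polynomials, $\deg Q_m=m$, with coefficients $q_{m,l}$, and integers $n\ge1$, $1\le k\le n$, $s\ge1$, let $\Delta_{k,n,s}(Q)$ be the determinant of the $k\times k$ matrix with first row entries $\left[\binom{n-k}{s-1}+\cdots+\binom{n-k+c-1}{s-1}\right]q_{n-k+c,\,n-k}$ ($1\le c\le k$) and, for $2\le\rho\le k$, entries $q_{n-k+c,\;n-k+\rho-1}$. Write $\Delta_{k,n,s}=\Delta_{k,n,s}(P)$ and $\Delta^{(1)}_{k,n,s}=\Delta_{k,n,s}(P^{(1)})$. Then $$\Delta^{(1)}_{k,n,s}=\Delta_{k,n,s}+\sum_{j=0}^{k-1}(-1)^j\binom{n-k+j}{s-1}b_{n-k+j,\,n-k}\left[\sum_{r=1}^{k-j}\gamma_{n-k+j+1}\cdots\gamma_{n-k+j+r}\,E_{k,n,j+r-1}\right],$$ where for $0\le t\le k-1$, $E_{k,n,t}$ is the determinant of the $(k-t-1)\times(k-t-1)$ matrix with $(\rho,c)$ entry $b_{n-k+t+1+c,\;n-k+t+\rho}$,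 and $E_{k,n,k-1}=1$.
   Context: Conventions: $q_{m,m}=1$, $q_{m,l}=0$ for $l>m$ (likewise for $b$, $b^{(1)}$); $\binom{m}{s-1}=0$ for $m<s-1$. Standing assumptions of the paper: $(P_n)$ are monic eigenpolynomials of $L=\sum_{i=0}^Na_i(x)\partial_x^i$ ($\deg a_i\le i$, $a_0\equiv0$) with eigenvalues $\lambda_n$, $\lambda_0=0$, $\lambda_n\notin\{0,\lambda_1,\dots,\lambda_{n-1}\}$. *)

From HB Require Import structures.
From mathcomp Require Import all_boot all_order all_algebra.
From mathcomp Require Import complex.
From mathcomp Require Import Rstruct.
Set Implicit Arguments. Unset Strict Implicit. Unset Printing Implicit Defensive.
Import Order.TTheory GRing.Theory Num.Theory.
Local Open Scope ring_scope.

Definition C : Type := (Rdefinitions.R)[i].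

Definition P1 (P : nat -> {poly C}) (gamma : nat -> C) (n : nat) : {poly C} :=
  if n is m.+1 then P n + gamma n *: P m else P 0%N.

(* Delta_{k,n,s}(Q): k x k determinant; with 0-based row i (rho = i+1) and
   column j (c = j+1):
   row 0:  [C(n-k,s-1)+...+C(n-k+c-1,s-1)] q_{n-k+c, n-k}
   row i>=1: q_{n-k+c, n-k+rho-1}.  Here q_{m,l} = (Q m)`_l. *)
Definition Delta (Q : nat -> {poly C}) (k n s : nat) : C :=
  \det (\matrix_(i < k, j < k)
          (if i == 0%N :> nat then
             (\sum_(0 <= l < j.+1) ('C(n - k + l, s - 1))%:R)
               * (Q (n - k + j.+1)%N)`_(n - k)
           else (Q (n - k + j.+1)%N)`_(n - k + i))).

(* E_{k,n,t}: (k-t-1) x (k-t-1) determinant with (rho,c) entry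
   b_{n-k+t+1+c, n-k+t+rho}; for t = k-1 this is the empty determinant 1. *)
Definition Emat (P : nat -> {poly C}) (k n t : nat) : C :=
  \det (\matrix_(i < k - t - 1, j < k - t - 1)
          (P (n - k + t + 1 + j.+1)%N)`_(n - k + t + i.+1)).

From mathcomp Require Import all_boot all_order all_algebra.
From mathcomp Require Import complex Rstruct.
From mathcomp Require Import ring zify.
Set Implicit Arguments. Unset Strict Implicit. Unset Printing Implicit Defensive.
Import GRing.Theory.
Local Open Scope ring_scope.

(* Since P^(1)_m = P_m + gamma_m P_(m-1), every column of the Delta-matrix of
   P^(1) is the corresponding column of the Delta-matrix A of P plus gamma
   times the previous one, except in the first row, where the partial binomial
   sums leave a correction w.  So the new matrix is A U + e_0 w with U unit
   upper bidiagonal; multiplying on the right by U^-1, whose entries are signed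
   products of consecutive gammas, turns it into A perturbed in its first row
   only, and expanding along that row gives det A plus a combination of the
   first-row cofactors of A.  As P_m is monic of degree m, deleting the first
   row and column l of A leaves a matrix whose first l columns are unit lower
   triangular, so that cofactor is +-E_{k,n,l}. *)

Lemma sum_mul_nat_eq (R : nzSemiRingType) (k : nat) (f : nat -> R) (l : nat) :
  \sum_(j < k) f j * (j == l :> nat)%:R = if (l < k)%N then f l else 0.
Proof. by under eq_bigr do rewrite mulr_natr mulrb; rewrite -big_mkcond big_ord1_eq. Qed.

Lemma sign_sqr (R : pzRingType) (n : nat) : (-1) ^+ n * (-1) ^+ n = 1 :> R.
Proof. by rewrite -exprD -signr_odd addnn odd_double. Qed.

Lemma det_add_delta_mul (R : comNzRingType) (k : nat)
    (A : 'M[R]_k) (r : 'I_k) (v : 'rV[R]_k) :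
  \det (A + delta_mx r 0 *m v) = \det A + \sum_j v 0 j * cofactor A r j.
Proof.
have row_r j : (A + delta_mx r 0 *m v) r j = A r j + v 0 j.
  by rewrite !mxE big_ord1 !mxE !eqxx mul1r.
have cof_r j : cofactor (A + delta_mx r 0 *m v) r j = cofactor A r j.
  rewrite /cofactor; congr (_ * \det _); apply/matrixP => i l.
  rewrite !mxE big_ord1 !mxE (eq_sym (lift r i)) (negbTE (neq_lift r i)).
  by rewrite mul0r addr0.
rewrite (expand_det_row _ r) [\det A](expand_det_row _ r) -big_split /=.
by apply: eq_bigr => j _; rewrite row_r cof_r mulrDl.
Qed.

Section Bidiagonal.
Variables (R : comNzRingType) (k : nat) (g : nat -> R).

Definition bidiag_mx : 'M[R]_k :=
  \matrix_(i, l) ((i == l :> nat)%:R + (i.+1 == l)%:R * g l).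

Definition bidiag_inv_coef (j l : nat) : R :=
  if (j <= l)%N then (-1) ^+ (l - j) * \prod_(j <= u < l) g u.+1 else 0.

Definition bidiag_inv_mx : 'M[R]_k := \matrix_(j, l) bidiag_inv_coef j l.

Lemma mulmx_bidiag (m : nat) (F : nat -> nat -> R) :
  (\matrix_(i < m, j < k) F i j) *m bidiag_mx =
  \matrix_(i < m, j < k) (F i j + if (0 < j)%N then g j * F i j.-1 else 0).
Proof.
apply/matrixP => i l; rewrite !mxE; under eq_bigr do rewrite !mxE mulrDr mulrA.
rewrite big_split /= -mulr_suml sum_mul_nat_eq ltn_ord; congr (_ + _).
case: l => [[|l] //= lt_lk].
  by rewrite big1 ?mul0r // => j _; rewrite mulr0.
by under eq_bigr do rewrite eqSS; rewrite sum_mul_nat_eq ltnW // mulrC.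
Qed.

Lemma det_bidiag : \det bidiag_mx = 1.
Proof.
rewrite -det_tr det_trig; last first.
  by apply/is_trig_mxP => i j lt_ij; rewrite !mxE !gtn_eqF ?mul0r ?addr0 // ltnW.
by apply: big1 => i _; rewrite !mxE eqxx gtn_eqF // mul0r addr0.
Qed.

Lemma mul_bidiag_inv : bidiag_inv_mx *m bidiag_mx = 1%:M.
Proof.
apply/matrixP => j l; rewrite mulmx_bidiag !mxE -val_eqE /= /bidiag_inv_coef.
case: l => [[|l] lt_lk] /=.
  by case: j => [[|j] ?] /=; rewrite ?addr0 ?subnn ?big_geq ?mulr1.
case: (ltngtP j l.+1) => [le_jl | lt_lj | ->].
- by rewrite -ltnS le_jl (@subSn j l le_jl) big_nat_recr //= exprS; ring.
- by rewrite leqNgt (ltnW lt_lj) mulr0 add0r.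
- by rewrite ltnn subnn big_geq ?mulr1 ?mulr0 ?addr0.
Qed.

Lemma det_mul_bidiag_add_delta (A : 'M[R]_k) (r : 'I_k) (w : 'rV[R]_k) :
  \det (A *m bidiag_mx + delta_mx r 0 *m w) =
  \det A + \sum_l (w *m bidiag_inv_mx) 0 l * cofactor A r l.
Proof.
have -> : A *m bidiag_mx + delta_mx r 0 *m w =
          (A + delta_mx r 0 *m (w *m bidiag_inv_mx)) *m bidiag_mx.
  by rewrite mulmxDl -!mulmxA mul_bidiag_inv mulmx1.
by rewrite det_mulmx det_bidiag mulr1 det_add_delta_mul.
Qed.

Lemma sum_bidiag_inv_row (j : nat) (F : nat -> R) : (j < k)%N ->
  g j * \sum_(l < k) bidiag_inv_coef j l * ((-1) ^+ l * F l) =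
  (-1) ^+ j *
    \sum_(1 <= r < (k - j).+1) (\prod_(0 <= u < r) g (j + u)) * F (j + r - 1)%N.
Proof.
move=> lt_jk.
rewrite -(big_mkord xpredT (fun l => bidiag_inv_coef j l * ((-1) ^+ l * F l))).
rewrite (big_cat_nat (n := j)) ?(ltnW lt_jk) //=.
rewrite big_nat_cond big1 ?add0r => [|l /andP[/andP[_ lt_lj] _]]; last first.
  by rewrite /bidiag_inv_coef leqNgt lt_lj mul0r.
rewrite (big_addn 0 k j) big_add1 /= !mulr_sumr.
apply: eq_bigr => l _.
rewrite /bidiag_inv_coef leq_addl addnK (big_addn 0 _ j) addnK big_nat_recl //.
rewrite addnS subn1 /= addn0 (addnC l) exprD.
under [in RHS]eq_bigr do rewrite addnS addnC.
set p := \prod_(_ <= _ < _) _.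
transitivity ((-1) ^+ l * (-1) ^+ l * ((-1) ^+ j * (g j * p * F (j + l)%N))).
  by ring.
by rewrite sign_sqr mul1r.
Qed.

Lemma sum_row_mul_bidiag_inv (c F : nat -> R) :
  \sum_(l < k) (\row_(j < k) (g j * c j) *m bidiag_inv_mx) 0 l * ((-1) ^+ l * F l) =
  \sum_(0 <= j < k) (-1) ^+ j * c j *
    \sum_(1 <= r < (k - j).+1) (\prod_(0 <= u < r) g (j + u)) * F (j + r - 1)%N.
Proof.
under eq_bigr do rewrite mxE mulr_suml.
rewrite exchange_big big_mkord; apply: eq_bigr => j _.
rewrite [in RHS](mulrC _ (c j)) -[in RHS]mulrA -(sum_bidiag_inv_row _ (ltn_ord j)).
by rewrite !mulr_sumr; apply: eq_bigr => l _; rewrite !mxE; ring.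
Qed.

End Bidiagonal.

Lemma det_drop_lower_unit_cols (R : comNzRingType) (N l q : nat) (F : nat -> nat -> R) :
  N = (l + q)%N ->
  (forall i j, (j < l)%N -> (j <= i)%N -> F i j = (i == j)%:R) ->
  \det (\matrix_(i < N, j < N) F i j) =
  \det (\matrix_(i < q, j < q) F (i + l)%N (j + l)%N).
Proof.
move=> ->; elim: l F => [|l IHl] F unitF.
  by congr (\det _); apply/matrixP => i j; rewrite !mxE !addn0.
change (l.+1 + q)%N with (l + q).+1.
rewrite (expand_det_col _ ord0) big_ord_recl big1 ?addr0 => [|i _]; last first.
  by rewrite mxE unitF //= mul0r.
rewrite mxE unitF //= mul1r /cofactor expr0 mul1r.
have -> : row' ord0 (col' ord0 (\matrix_(i < (l + q).+1, j < (l + q).+1) F i j)) =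
          \matrix_(i < l + q, j < l + q) F i.+1 j.+1.
  by apply/matrixP => i j; rewrite !mxE.
rewrite (IHl (fun i j => F i.+1 j.+1)) => [|i j lt_jl le_ji]; last exact: unitF.
by congr (\det _); apply/matrixP => i j; rewrite !mxE !addnS.
Qed.

Definition Delta_entry (Q : nat -> {poly C}) (k n s i j : nat) : C :=
  if i == 0%N then
    (\sum_(0 <= l < j.+1) ('C(n - k + l, s - 1))%:R) * (Q (n - k + j.+1)%N)`_(n - k)
  else (Q (n - k + j.+1)%N)`_(n - k + i).

Definition Delta_mx (Q : nat -> {poly C}) (k n s : nat) : 'M[C]_k :=
  \matrix_(i < k, j < k) Delta_entry Q k n s i j.

Lemma Delta_detE (Q : nat -> {poly C}) (k n s : nat) :
  Delta Q k n s = \det (Delta_mx Q k n s).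
Proof. by []. Qed.

Section MonicFamily.
Variables (P : nat -> {poly C}).
Hypothesis P_monic : forall m, P m \is monic.
Hypothesis P_size : forall m, size (P m) = m.+1.

Lemma coefP_gt m i : (m < i)%N -> (P m)`_i = 0.
Proof. by move=> lt_mi; rewrite nth_default // P_size. Qed.

Lemma coefP_deg m : (P m)`_m = 1.
Proof. by have := monicP (P_monic m); rewrite /lead_coef P_size. Qed.

(* The first-row correction comes from the telescoping of the partial sums
   \sum_(l <= j) 'C(n - k + l, s - 1) against the shift of columns. *)
Lemma Delta_mx_P1 (gamma : nat -> C) (k n s : nat) (k_gt0 : (0 < k)%N) :
  Delta_mx (P1 P gamma) k n s =
  Delta_mx P k n s *m bidiag_mx k (fun j => gamma (n - k + j.+1)%N) +
  delta_mx (Ordinal k_gt0) 0 *m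
    \row_j (gamma (n - k + j.+1)%N *
            (('C(n - k + j, s - 1))%:R * (P (n - k + j)%N)`_(n - k))).
Proof.
rewrite mulmx_bidiag; apply/matrixP => i j; rewrite !mxE big_ord1 !mxE -val_eqE /=.
rewrite /Delta_entry /P1 addnS; set m := (n - k)%N.
case: (nat_of_ord i) => [|i']; case: (nat_of_ord j) => [|j'] /=; rewrite ?coefD ?coefZ.
- by rewrite big_nat1 addn0; ring.
- by rewrite big_nat_recr //=; ring.
- by rewrite (coefP_gt (m := (m + 0)%N)) ?mulr0 ?mul0r ?addr0 // ltn_add2l.
- by rewrite mul0r addr0.
Qed.

Lemma cofactor_Delta_mx0 (k n s : nat) (k_gt0 : (0 < k)%N) (l : 'I_k) :
  cofactor (Delta_mx P k n s) (Ordinal k_gt0) l = (-1) ^+ l * Emat P k n l.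
Proof.
rewrite /cofactor /= add0n; congr (_ * _); set m := (n - k)%N.
have -> : row' (Ordinal k_gt0) (col' l (Delta_mx P k n s)) =
          \matrix_(i < k.-1, j < k.-1) (P (m + (bump l j).+1)%N)`_(m + i.+1).
  by apply/matrixP => i j; rewrite !mxE.
rewrite (@det_drop_lower_unit_cols _ _ l (k - l - 1)
          (fun i j => (P (m + (bump l j).+1)%N)`_(m + i.+1))); last 2 first.
- by have := ltn_ord l; lia.
- move=> i j lt_jl le_ji; rewrite /bump leqNgt lt_jl add0n.
  have [->|ne_ij] := eqVneq i j; first by rewrite coefP_deg.
  by rewrite coefP_gt //; lia.
rewrite /Emat; congr (\det _); apply/matrixP => i j; rewrite !mxE.
by rewrite /bump leq_addl; congr (P _)`_ _; lia.
Qed.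

End MonicFamily.

Theorem lemma4 (P : nat -> {poly C}) (gamma : nat -> C)
  (hmonic : forall m, P m \is monic)
  (hdeg : forall m, size (P m) = m.+1)
  (hgamma : forall m, (1 <= m)%N -> gamma m != 0)
  (n k s : nat) (hn : (1 <= n)%N) (hk1 : (1 <= k)%N) (hkn : (k <= n)%N)
  (hs : (1 <= s)%N) :
  Delta (P1 P gamma) k n s =
  Delta P k n s +
  \sum_(0 <= j < k)
     (-1) ^+ j * ('C(n - k + j, s - 1))%:R * (P (n - k + j)%N)`_(n - k) *
     (\sum_(1 <= r < (k - j).+1)
        (\prod_(1 <= u < r.+1) gamma (n - k + j + u)%N) *
        Emat P k n (j + r - 1)).
Proof.
rewrite !Delta_detE (Delta_mx_P1 hdeg _ _ _ hk1) det_mul_bidiag_add_delta.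
congr (_ + _); under eq_bigr do rewrite (cofactor_Delta_mx0 hmonic hdeg).
rewrite (@sum_row_mul_bidiag_inv _ k (fun j => gamma (n - k + j.+1)%N)
          (fun j => 'C(n - k + j, s - 1)%:R * (P (n - k + j)%N)`_(n - k))).
apply: eq_bigr => j _; rewrite mulrA; congr (_ * _).
apply: eq_bigr => r _; rewrite big_add1 /=; congr (_ * _).
by apply: eq_bigr => u _; rewrite !addnS addnA.
Qed.
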